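(* Let $(X_0^T,Y_0^T)$ be a pair of jointly distributed continuous-time stochastic processes on $[0,T)$, and let $\mathbf{t},\mathbf{t}'\in\mathcal{T}(0,T)$ be partitions such that $\mathbf{t}'$ is a refinement of $\mathbf{t}$, i.e., $\{t_i\}\subset\{t'_i\}$. Then $$I_{\mathbf{t}'}(X_0^T\to Y_0^T)\le I_{\mathbf{t}}(X_0^T\to Y_0^T).$$
   Context: All random objects live on a common probability space. For random objects $U,V,W$ with values in arbitrary measurable spaces, the conditional mutual information is $I(U;V\mid W):=\sup I([U];[V]\mid W)$, where the supremum is over all finite quantizations $[U],[V]$ of $U$ and $V$. It takes values in $[0,\infty]$, and the unconditional mutual information is the case of trivial $W$. For a continuous-time process $\{X_t\}$ and $a<b$, write $X_a^b=\{X_s: a\le s<b\}$; the object $Y_0^0$ is trivial (constant). A (finite) partition of $[0,T)$ is a vector $\mathbf{t}=(t_0,t_1,\ldots,t_n)$ with $0=t_0<t_1<\cdots<t_n=T$, and $\mathcal{T}(0,T)$ denotes the set of all such partitions. For a partition $\mathbf{t}$, $$I_{\mathbf{t}}(X_0^T\to Y_0^T):=\sum_{i=1}^n I\big(Y_{t_{i-1}}^{t_i};X_0^{t_i}\,\big|\,Y_0^{t_{i-1}}\big).$$ This is the discrete-time directed information $I(A^n\to B^n)=\sum_{i=1}^n I(A^i;B_i\mid B^{i-1})$ between the length-$n$ sequences of path segments $A_i=X_{t_{i-1}}^{t_i}$ and $B_i=Y_{t_{i-1}}^{t_i}$. *)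

From HB Require Import structures.
From mathcomp Require Import all_boot all_order all_algebra.
From mathcomp Require Import all_classical all_reals all_analysis.
Set Implicit Arguments. Unset Strict Implicit. Unset Printing Implicit Defensive.
Import Order.TTheory GRing.Theory Num.Theory.
Local Open Scope classical_set_scope.
Local Open Scope ring_scope.

Section InfoDefs.
Variables (d : measure_display) (Omega : measurableType d) (R : realType).
Variable P : probability Omega R.

Definition dmi (K1 K2 : finType) (A : Omega -> K1) (B : Omega -> K2) : R :=
  \sum_(a : K1) \sum_(b : K2)
    let p := fine (P (A @^-1` [set a] `&` B @^-1` [set b])) in
    let pa := fine (P (A @^-1` [set a])) in
    let pb := fine (P (B @^-1` [set b])) in
    if 0 < p then p * ln (p / (pa * pb)) else 0.

(* A finite quantization of a random object whose information is the
   sigma-algebra G: a finite-valued function whose level sets lie in G. *)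
Definition quantization (G : set (set Omega)) (n : nat) (q : Omega -> 'I_n) : Prop :=
  forall k : 'I_n, G (q @^-1` [set k]).

(* I(A;B | W) for finite-valued A, B and arbitrary W (with sigma-algebra GW),
   via the chain rule I(A;B|W) = I(A;(B,W)) - I(A;W), where mutual information
   with the arbitrary object W is the supremum over finite quantizations of W.
   Both suprema are finite (bounded by H(A)). *)
Definition cmi_fin (GW : set (set Omega)) (K1 K2 : finType)
    (A : Omega -> K1) (B : Omega -> K2) : \bar R :=
  (ereal_sup [set x | exists n (q : Omega -> 'I_n),
       quantization GW q /\ x = (dmi A (fun w => (B w, q w)))%:E]
   - ereal_sup [set x | exists n (q : Omega -> 'I_n),
       quantization GW q /\ x = (dmi A q)%:E])%E.

(* I(U;V | W) := sup over finite quantizations [U],[V] of I([U];[V] | W);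
   U, V, W are given through the sigma-algebras they generate. *)
Definition cmi (GU GV GW : set (set Omega)) : \bar R :=
  ereal_sup [set x | exists n m (qu : Omega -> 'I_n) (qv : Omega -> 'I_m),
       quantization GU qu /\ quantization GV qv /\ x = cmi_fin GW qu qv].

(* The sigma-algebra generated by the path segment X_a^b = {X_s : a <= s < b}
   (i.e. the preimage of the product sigma-algebra under the segment map). *)
Definition seg_sigma (dT : measure_display) (T : measurableType dT)
    (X : R -> Omega -> T) (a b : R) : set (set Omega) :=
  <<s [set E | exists s A, a <= s < b /\ measurable A /\ E = X s @^-1` A] >>.

Definition is_partition (T : R) (t : seq R) : Prop :=
  [/\ (1 < size t)%N, sorted (fun x y => x < y) t,
      nth 0 t 0 = 0 & nth 0 t (size t).-1 = T].

Definition dir_info_part (dX dY : measure_display)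
    (TX : measurableType dX) (TY : measurableType dY)
    (X : R -> Omega -> TX) (Y : R -> Omega -> TY) (t : seq R) : \bar R :=
  (\sum_(1 <= i < size t)
     cmi (seg_sigma Y (nth 0%R t i.-1) (nth 0%R t i))
           (seg_sigma X 0%R (nth 0%R t i))
           (seg_sigma Y 0%R (nth 0%R t i.-1)))%E.

End InfoDefs.

From HB Require Import structures.
From mathcomp Require Import all_boot all_order all_algebra.
From mathcomp Require Import all_classical all_reals all_analysis.
From mathcomp Require Import ring lra.
Import Order.TTheory GRing.Theory Num.Theory.
Set Implicit Arguments. Unset Strict Implicit. Unset Printing Implicit Defensive.
Local Open Scope classical_set_scope.
Local Open Scope ring_scope.

(* The partition sum is [sum_i f(t_{i-1}, t_i)] with
   [f(a,b) = I(Y_a^b; X_0^b | Y_0^a)], so refining the partition cannot increase it as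
   soon as [f(a,s) + f(s,b) <= f(a,b)] for [a <= s <= b].  For finite quantizations this
   is the chain rule of conditional mutual information, once [Y_0^s] in the second term
   is seen as the pair [(Y_0^a, Y_a^s)]: the information of [Y_0^s] is generated by
   those of [Y_0^a] and [Y_a^s], so every quantization of [Y_0^s] is, up to an event
   of small probability, a function of quantizations of [Y_0^a] and [Y_a^s].  A
   Fano-type bound [H(Q | Q') <= |K|^2 (p + 2 sqrt p)], with [p = P(Q <> Q')], makes the
   resulting loss of mutual information arbitrarily small. *)

(** * Finite-valued measurable functions *)

Section LevelMeasurable.
Variables (T : Type) (G : set (set T)).
Hypothesis sG : sigma_algebra setT G.

Definition level_meas (K : Type) (h : T -> K) := forall k, G (h @^-1` [set k]).

Let G0 : G set0. Proof. by case: sG. Qed.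

Let GT : G setT.
Proof. by case: sG => _ GC _; have := GC _ G0; rewrite setD0. Qed.

Let GC A : G A -> G (~` A).
Proof. by case: sG => _ GC _ /GC; rewrite setTD. Qed.

Let GU A B : G A -> G B -> G (A `|` B).
Proof. by case: sG => _ _ GU hA hB; rewrite -bigcup2E; apply: GU => -[|[|n]]. Qed.

Let GI A B : G A -> G B -> G (A `&` B).
Proof. by move=> hA hB; rewrite -[A `&` B]setCK setCI; apply/GC/GU; exact: GC. Qed.

Let level_meas_seq (K : eqType) (h : T -> K) (s : seq K) :
  level_meas h -> G (h @^-1` [set k | k \in s]).
Proof.
move=> hh; elim: s => [|a s IH].
  by rewrite (_ : _ @^-1` _ = set0); [exact: G0|apply/seteqP; split].
rewrite (_ : _ @^-1` _ = h @^-1` [set a] `|` h @^-1` [set k | k \in s]).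
  exact: GU.
apply/seteqP; split => w /=; rewrite inE.
  by case/orP => [/eqP ->|ws]; [left|right].
by case => [->|ws]; rewrite ?eqxx ?ws ?orbT.
Qed.

Lemma level_meas_preimage (K : finType) (h : T -> K) (A : set K) :
  level_meas h -> G (h @^-1` A).
Proof.
move=> hh; rewrite (_ : A = [set k | k \in [seq k <- enum K | `[< A k >]]]).
  exact: level_meas_seq.
apply/seteqP; split => k /=; rewrite mem_filter mem_enum andbT.
  by move=> Ak; apply/asboolP.
by move/asboolP.
Qed.

Lemma level_meas_comp (K K' : finType) (h : T -> K) (f : K -> K') :
  level_meas h -> level_meas (f \o h).
Proof. by move=> hh k; rewrite comp_preimage; exact: level_meas_preimage. Qed.

Lemma level_meas_pair (K1 K2 : Type) (h1 : T -> K1) (h2 : T -> K2) :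
  level_meas h1 -> level_meas h2 -> level_meas (fun w => (h1 w, h2 w)).
Proof.
move=> hh1 hh2 [a b].
rewrite (_ : _ @^-1` _ = h1 @^-1` [set a] `&` h2 @^-1` [set b]); first exact: GI.
by apply/seteqP; split => w /= => [[-> ->]|[-> ->]].
Qed.

Lemma level_meas_cst (K : Type) (c : K) : level_meas (fun _ => c).
Proof.
move=> k; have [<-|nk] := pselect (c = k).
  by rewrite (_ : _ @^-1` _ = setT); [exact: GT|apply/seteqP; split].
by rewrite (_ : _ @^-1` _ = set0); [exact: G0|apply/seteqP; split].
Qed.

Lemma level_meas_indic S : G S -> level_meas (fun w => `[< S w >]).
Proof.
move=> GS [].
  by rewrite (_ : _ @^-1` _ = S) //; apply/seteqP; split => w /=; move/asboolP.
rewrite (_ : _ @^-1` _ = ~` S); first exact: GC.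
apply/seteqP; split => w /=; first by move=> + Sw; rewrite asboolT.
by move=> nS; apply/negbTE/asboolPn.
Qed.

End LevelMeasurable.

Lemma level_meas_sub (T K : Type) (G G' : set (set T)) (h : T -> K) :
  G `<=` G' -> level_meas G h -> level_meas G' h.
Proof. by move=> GG' hh k; apply: GG'. Qed.

Lemma quantization_enum_rank (d : measure_display) (T : measurableType d)
    (G : set (set T)) (K : finType) (h : T -> K) :
  level_meas G h -> quantization G (enum_rank \o h).
Proof.
move=> hh k; rewrite (_ : _ @^-1` _ = h @^-1` [set enum_val k]); first exact: hh.
by apply/seteqP; split => w /= => [<-|->]; rewrite ?enum_rankK ?enum_valK.
Qed.

Lemma enum_rank_compE (T : Type) (K : finType) (h : T -> K) (w w' : T) :
  (enum_rank \o h) w = (enum_rank \o h) w' <-> h w = h w'.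
Proof. by split => /= [/enum_rank_inj|->]. Qed.

Lemma measurableY (d : measure_display) (T : measurableType d) (A B : set T) :
  measurable A -> measurable B -> measurable (A `+` B).
Proof. by move=> mA mB; apply: measurableU; exact: measurableD. Qed.

Notation rv := (level_meas measurable).

Section RandomVariables.
Variables (d : measure_display) (Omega : measurableType d).

Lemma rv_pair (K1 K2 : Type) (X : Omega -> K1) (Y : Omega -> K2) :
  rv X -> rv Y -> rv (fun w => (X w, Y w)).
Proof. exact: (level_meas_pair (@sigma_algebra_measurable d Omega)). Qed.

Lemma rv_comp (K K' : finType) (X : Omega -> K) (f : K -> K') : rv X -> rv (f \o X).
Proof. exact: (level_meas_comp (@sigma_algebra_measurable d Omega)). Qed.

Lemma rv_preimage (K : finType) (X : Omega -> K) (A : set K) :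
  rv X -> measurable (X @^-1` A).
Proof. exact: (level_meas_preimage (@sigma_algebra_measurable d Omega)). Qed.

Lemma rv_neq (K : finType) (X Y : Omega -> K) : rv X -> rv Y ->
  measurable [set w | X w <> Y w].
Proof. by move=> hX hY; exact: rv_preimage [set u : K * K | u.1 <> u.2] (rv_pair hX hY). Qed.

End RandomVariables.

Ltac rvs := repeat first [assumption | apply: rv_pair].

Section Probability.
Variables (d : measure_display) (Omega : measurableType d) (R : realType).
Variable P : probability Omega R.

Definition pr (A : set Omega) : R := fine (P A).

Lemma prE A : measurable A -> P A = (pr A)%:E.
Proof.
move=> mA; rewrite /pr fineK // ge0_fin_numE ?measure_ge0 //.
by rewrite (le_lt_trans (probability_le1 P mA)) // ltry.
Qed.

Lemma pr_ge0 A : 0 <= pr A.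
Proof. by apply: fine_ge0; apply: measure_ge0. Qed.

Lemma pr_le1 A : measurable A -> pr A <= 1.
Proof. by move=> mA; rewrite -lee_fin -prE //; exact: probability_le1. Qed.

Lemma pr_setT : pr setT = 1.
Proof. by rewrite /pr probability_setT. Qed.

Lemma pr_set0 : pr set0 = 0.
Proof. by rewrite /pr measure0. Qed.

Lemma pr_le A B : measurable A -> measurable B -> A `<=` B -> pr A <= pr B.
Proof.
move=> mA mB AB; have : (P A <= P B)%E by rewrite le_measure ?inE.
by rewrite !prE // lee_fin.
Qed.

Lemma prU A B : measurable A -> measurable B -> A `&` B = set0 ->
  pr (A `|` B) = pr A + pr B.
Proof.
move=> mA mB AB; apply: EFin_inj; rewrite EFinD -!prE //; last exact: measurableU.
exact: measureU.
Qed.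

Lemma prU_le A B : measurable A -> measurable B -> pr (A `|` B) <= pr A + pr B.
Proof.
move=> mA mB; rewrite -lee_fin EFinD -!prE //; last exact: measurableU.
exact: measureU2.
Qed.

Lemma pr_bigU_le n (F : nat -> set Omega) : (forall k, measurable (F k)) ->
  pr (\big[setU/set0]_(k < n) F k) <= \sum_(k < n) pr (F k).
Proof.
move=> mF; elim: n => [|n IH]; first by rewrite !big_ord0 pr_set0.
rewrite !big_ord_recr /=; apply: le_trans (prU_le _ _) _.
- by apply: bigsetU_measurable => k _.
- exact: mF.
by rewrite lerD2r.
Qed.

Lemma probability_inhabited : inhabited Omega.
Proof.
have [[w _]|nO] := pselect (exists w : Omega, True); first exact: inhabits w.
have T0 : setT = set0 :> set Omega by apply/seteqP; split => // w _; apply: nO; exists w.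
by have := pr_setT; rewrite T0 pr_set0 => /eqP; rewrite eq_sym oner_eq0.
Qed.

Let pr_setI_preimage_seq (K : finType) (X : Omega -> K) (s : seq K) S :
  rv X -> measurable S -> uniq s ->
  \sum_(k <- s) pr (S `&` X @^-1` [set k]) = pr (S `&` X @^-1` [set k | k \in s]).
Proof.
move=> hX mS; elim: s => [|a s IH].
  by rewrite big_nil (_ : _ `&` _ = set0) ?pr_set0 //; apply/seteqP; split => w [].
rewrite /= => /andP[nas us]; rewrite big_cons IH //.
rewrite (_ : S `&` X @^-1` [set k | k \in a :: s] =
    (S `&` X @^-1` [set a]) `|` (S `&` X @^-1` [set k | k \in s])).
  rewrite prU //; first exact: measurableI.
    by apply: measurableI => //; exact: rv_preimage.
  by apply/seteqP; split => w //= [[_ ->] [_ aS]]; rewrite aS in nas.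
apply/seteqP; split => w /=; rewrite inE.
  by move=> [Sw /orP[/eqP->|ws]]; [left|right].
by move=> [[Sw ->]|[Sw ws]]; split => //; rewrite ?eqxx ?ws ?orbT.
Qed.

Lemma pr_partition (K : finType) (X : Omega -> K) S : rv X -> measurable S ->
  \sum_k pr (S `&` X @^-1` [set k]) = pr S.
Proof.
move=> hX mS; rewrite -big_enum /= pr_setI_preimage_seq ?enum_uniq //.
by congr pr; apply/seteqP; split => w /= => [[]|Sw]; rewrite ?mem_enum.
Qed.

End Probability.

(** * Entropy and mutual information of finite random variables *)

Lemma ln_le_subr1 (R : realType) (x : R) : 0 < x -> ln x <= x - 1.
Proof. by move=> x0; have := @le_ln1Dx _ (x - 1); rewrite (addrC 1) subrK; apply; lra. Qed.

Lemma sum_prod3 (R : realType) (K1 K2 K3 : finType) (G : K1 * K2 * K3 -> R) :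
  \sum_u G u = \sum_x \sum_y \sum_z G (x, y, z).
Proof. by rewrite pair_bigA /= pair_bigA /=; apply: eq_bigr => -[[x y] z]. Qed.

Lemma sum_prod2 (R : realType) (K1 K2 : finType) (G : K1 * K2 -> R) :
  \sum_u G u = \sum_x \sum_y G (x, y).
Proof. by rewrite pair_bigA /=; apply: eq_bigr => -[x y]. Qed.

Lemma exchange_big3 (R : realType) (K1 K2 K3 : finType) (G : K1 -> K2 -> K3 -> R) :
  \sum_x \sum_y \sum_z G x y z = \sum_z \sum_x \sum_y G x y z.
Proof. by under eq_bigr do rewrite exchange_big; rewrite exchange_big. Qed.

Lemma mul_ln_ratio_le (R : realType) (p a b c : R) : 0 <= p -> p <= a -> p <= b -> a <= c ->
  0 <= a -> 0 <= b ->
  p * ln a + p * ln b - p * ln p - p * ln c <= (if 0 < c then c^-1 else 0) * a * b - p.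
Proof.
move=> p0 pa pb ac a0 b0; have [->|pn0] := eqVneq p 0.
  rewrite !mul0r addr0 !subr0; case: ifP => [c0|_]; last by rewrite !mul0r.
  by rewrite !mulr_ge0 // invr_ge0 ltW.
have pp : 0 < p by rewrite lt_def pn0 p0.
have [ap bp] : 0 < a /\ 0 < b by split; apply: lt_le_trans pp _.
have cp : 0 < c by apply: lt_le_trans ac.
rewrite ifT //; have h : ln (a * b / (p * c)) <= a * b / (p * c) - 1.
  by apply: ln_le_subr1; rewrite divr_gt0 ?mulr_gt0.
rewrite ln_div ?posrE ?mulr_gt0 // !lnM ?posrE // in h.
have -> : c^-1 * a * b - p = p * (a * b / (p * c) - 1).
  by field; rewrite ?gt_eqF // mulr_gt0.
by apply: le_trans (ler_wpM2l (ltW pp) h); lra.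
Qed.

Lemma neg_xlnx_le_sqrt (R : realType) (p : R) : 0 <= p -> - (p * ln p) <= 2 * Num.sqrt p.
Proof.
move=> p0; have [->|pn0] := eqVneq p 0; first by rewrite mul0r oppr0 mulr_ge0 ?sqrtr_ge0.
have pp : 0 < p by rewrite lt_def pn0 p0.
set s := Num.sqrt p; have sp : 0 < s by rewrite sqrtr_gt0.
have ps : p = s * s by rewrite -expr2 sqr_sqrtr.
have h : ln (s^-1) <= s^-1 - 1 by apply: ln_le_subr1; rewrite invr_gt0.
rewrite lnV ?posrE // in h.
have h2 : s * s * (- ln s) <= s * s * (s^-1 - 1).
  by apply: ler_wpM2l => //; rewrite mulr_ge0 // ltW.
have e : s * s * (s^-1 - 1) = s - s * s by field; rewrite gt_eqF.
rewrite e in h2.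
rewrite ps lnM ?posrE //; have : 0 <= s * s by rewrite mulr_ge0 // ltW.
nra.
Qed.

Section Entropy.
Variables (d : measure_display) (Omega : measurableType d) (R : realType).
Variable P : probability Omega R.
Local Notation pr := (pr P).

Definition pmass (K : Type) (X : Omega -> K) k := pr (X @^-1` [set k]).

Definition entropy (K : finType) (X : Omega -> K) := - \sum_k pmass X k * ln (pmass X k).

Lemma pmass_ge0 K (X : Omega -> K) k : 0 <= pmass X k.
Proof. exact: pr_ge0. Qed.

Lemma pmass_pair (K1 K2 : Type) (A : Omega -> K1) (B : Omega -> K2) a b :
  pmass (fun w => (A w, B w)) (a, b) = pr (A @^-1` [set a] `&` B @^-1` [set b]).
Proof. by congr pr; apply/seteqP; split => w /= => [[-> ->]|[-> ->]]. Qed.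

Lemma pmass_comp (K K' : finType) (X : Omega -> K) (f : K -> K') y : rv X ->
  pmass (f \o X) y = \sum_(x | f x == y) pmass X x.
Proof.
move=> hX; rewrite /pmass -(pr_partition P hX (rv_comp f hX y)) [RHS]big_mkcond.
apply: eq_bigr => x _; case: eqP => [fxy|nf].
  by congr pr; apply/seteqP; split => w /= => [[]|Xw]; rewrite ?Xw.
rewrite (_ : _ `&` _ = set0) ?pr_set0 //.
by apply/seteqP; split => w //= [fw Xw]; apply: nf; rewrite -Xw.
Qed.

Lemma entropy_comp_le (K K' : finType) (X : Omega -> K) (f : K -> K') : rv X ->
  entropy (f \o X) <= entropy X.
Proof.
move=> hX; rewrite /entropy lerN2.
have -> : \sum_y pmass (f \o X) y * ln (pmass (f \o X) y) =
          \sum_x pmass X x * ln (pmass (f \o X) (f x)).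
  rewrite (partition_big f predT) //=; apply: eq_bigr => y _.
  by rewrite pmass_comp // mulr_suml; apply: eq_bigr => x /eqP fx; rewrite pmass_comp // fx.
apply: ler_sum => x _; have [->|p0] := eqVneq (pmass X x) 0; first by rewrite !mul0r.
have pp : 0 < pmass X x by rewrite lt_def p0 pmass_ge0.
have le : pmass X x <= pmass (f \o X) (f x).
  by apply: pr_le; [exact: hX|exact: rv_comp|move=> w /= ->].
by rewrite ler_wpM2l ?pmass_ge0 // ler_ln ?posrE //; exact: lt_le_trans le.
Qed.

Lemma entropy_le_determined (K1 K2 : finType) (X : Omega -> K1) (Y : Omega -> K2) :
  rv X -> (forall w w', X w = X w' -> Y w = Y w') -> entropy Y <= entropy X.
Proof.
move=> hX XY; have [w0] := probability_inhabited P.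
pose f k := if pselect (exists w, X w = k) is left h then Y (proj1_sig (cid h)) else Y w0.
suff -> : Y = f \o X by exact: entropy_comp_le.
apply: funext => w; rewrite /f /=; case: pselect => [h|[]]; last by exists w.
by apply: XY; rewrite (proj2_sig (cid h)).
Qed.

Lemma entropy_eq_equiv (K1 K2 : finType) (X : Omega -> K1) (Y : Omega -> K2) :
  rv X -> rv Y -> (forall w w', X w = X w' <-> Y w = Y w') -> entropy X = entropy Y.
Proof.
move=> hX hY XY; apply/le_anti/andP.
by split; apply: entropy_le_determined => // w w' /XY.
Qed.

Lemma dmi_termE (p pa pb : R) : 0 <= p -> p <= pa -> p <= pb ->
  (if 0 < p then p * ln (p / (pa * pb)) else 0) = p * ln p - p * ln pa - p * ln pb.
Proof.
move=> p0 pa0 pb0; case: ifP => [pp|/negbT]; last first.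
  rewrite -leNgt => p0'; have -> : p = 0 by apply: le_anti; rewrite p0 p0'.
  by rewrite !mul0r subrr subr0.
have [pa' pb'] : 0 < pa /\ 0 < pb by split; apply: lt_le_trans pp _.
by rewrite ln_div ?posrE ?mulr_gt0 // lnM ?posrE //; ring.
Qed.

Lemma dmi_entropyE (K1 K2 : finType) (A : Omega -> K1) (B : Omega -> K2) : rv A -> rv B ->
  dmi P A B = entropy A + entropy B - entropy (fun w => (A w, B w)).
Proof.
move=> hA hB; pose pAB a b := pr (A @^-1` [set a] `&` B @^-1` [set b]).
have margA a : \sum_b pAB a b = pmass A a by rewrite pr_partition.
have margB b : \sum_a pAB a b = pmass B b.
  by rewrite /pmass -(pr_partition P hA (hB b)); apply: eq_bigr => a _; rewrite /pAB setIC.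
have -> : dmi P A B = \sum_a \sum_b
    (pAB a b * ln (pAB a b) - pAB a b * ln (pmass A a) - pAB a b * ln (pmass B b)).
  apply: eq_bigr => a _; apply: eq_bigr => b _ /=.
  by apply: dmi_termE; rewrite ?pr_ge0 //; apply: pr_le => //;
    by [apply: measurableI|move=> w []].
have -> : entropy (fun w => (A w, B w)) = - \sum_a \sum_b pAB a b * ln (pAB a b).
  by rewrite /entropy sum_prod2; under eq_bigr do under eq_bigr do rewrite pmass_pair.
have -> : entropy A = - \sum_a \sum_b pAB a b * ln (pmass A a).
  by congr (- _); apply: eq_bigr => a _; rewrite -mulr_suml margA.
have -> : entropy B = - \sum_a \sum_b pAB a b * ln (pmass B b).
  by congr (- _); rewrite exchange_big; apply: eq_bigr => b _; rewrite -mulr_suml margB.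
under eq_bigr do rewrite !sumrB.
rewrite !sumrB; lra.
Qed.

Section Submodularity.
Variables (K1 K2 K3 : finType) (X : Omega -> K1) (Y : Omega -> K2) (Z : Omega -> K3).
Hypotheses (hX : rv X) (hY : rv Y) (hZ : rv Z).

Let p x y z := pr (X @^-1` [set x] `&` Y @^-1` [set y] `&` Z @^-1` [set z]).
Let pxz x z := pr (X @^-1` [set x] `&` Z @^-1` [set z]).
Let pyz y z := pr (Y @^-1` [set y] `&` Z @^-1` [set z]).

Let mXZ x z : measurable (X @^-1` [set x] `&` Z @^-1` [set z]).
Proof. exact: measurableI. Qed.

Let mYZ y z : measurable (Y @^-1` [set y] `&` Z @^-1` [set z]).
Proof. exact: measurableI. Qed.

Let margY x z : \sum_y p x y z = pxz x z.
Proof. by rewrite /pxz -(pr_partition P hY (mXZ x z)); apply: eq_bigr => y _; rewrite setIAC. Qed.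

Let margX y z : \sum_x p x y z = pyz y z.
Proof.
by rewrite /pyz -(pr_partition P hX (mYZ y z)); apply: eq_bigr => x _; rewrite /p -setIA setIC.
Qed.

Let margXZ z : \sum_x pxz x z = pmass Z z.
Proof. by rewrite /pmass -(pr_partition P hX (hZ z)); apply: eq_bigr => x _; rewrite setIC. Qed.

Let margYZ z : \sum_y pyz y z = pmass Z z.
Proof. by rewrite /pmass -(pr_partition P hY (hZ z)); apply: eq_bigr => y _; rewrite setIC. Qed.

Let gibbs : \sum_x \sum_y \sum_z (p x y z * ln (pxz x z) + p x y z * ln (pyz y z)
     - p x y z * ln (p x y z) - p x y z * ln (pmass Z z)) <= 0.
Proof.
apply: (@le_trans _ _ (\sum_x \sum_y \sum_z
    ((if 0 < pmass Z z then (pmass Z z)^-1 else 0) * pxz x z * pyz y z - p x y z))).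
  do 3!(apply: ler_sum => ? _); apply: mul_ln_ratio_le; rewrite ?pr_ge0 //;
    apply: pr_le => //; do ?apply: measurableI => //; by move=> w [[]] || move=> w [].
rewrite exchange_big3 le_eqVlt big1 ?eqxx // => z _.
under eq_bigr do rewrite sumrB; rewrite sumrB.
under eq_bigr do rewrite -mulr_sumr margYZ.
rewrite -mulr_suml -mulr_sumr margXZ; under eq_bigr do rewrite margY.
rewrite margXZ; case: ifP => [pz0|/negbT].
  by rewrite mulVf ?mul1r ?subrr // gt_eqF.
rewrite -leNgt => pz0; have -> : pmass Z z = 0 by apply: le_anti; rewrite pz0 pr_ge0.
by rewrite !mul0r subrr.
Qed.

Lemma entropy_submod : entropy (fun w => (X w, Y w, Z w)) + entropy Z <=
  entropy (fun w => (X w, Z w)) + entropy (fun w => (Y w, Z w)).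
Proof.
have -> : entropy (fun w => (X w, Y w, Z w)) = - \sum_x \sum_y \sum_z p x y z * ln (p x y z).
  rewrite /entropy sum_prod3; congr (- _); do 3!(apply: eq_bigr => ? _).
  by rewrite /pmass /p; congr (_ * ln _); congr pr;
    apply/seteqP; split => w /= => [[-> -> ->]|[[-> ->] ->]].
have -> : entropy (fun w => (X w, Z w)) = - \sum_x \sum_y \sum_z p x y z * ln (pxz x z).
  rewrite /entropy sum_prod2; congr (- _); apply: eq_bigr => x _.
  by rewrite exchange_big; apply: eq_bigr => z _; rewrite pmass_pair -mulr_suml margY.
have -> : entropy (fun w => (Y w, Z w)) = - \sum_x \sum_y \sum_z p x y z * ln (pyz y z).
  rewrite /entropy sum_prod2; congr (- _); rewrite [RHS]exchange_big.
  apply: eq_bigr => y _; rewrite [RHS]exchange_big; apply: eq_bigr => z _.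
  by rewrite pmass_pair -mulr_suml margX.
have -> : entropy Z = - \sum_x \sum_y \sum_z p x y z * ln (pmass Z z).
  rewrite /entropy exchange_big3; congr (- _); apply: eq_bigr => z _.
  by under eq_bigr do rewrite -mulr_suml margY; rewrite -mulr_suml margXZ.
move: gibbs; under eq_bigr do under eq_bigr do rewrite !sumrB big_split /=.
under eq_bigr do rewrite !sumrB big_split /=.
rewrite !sumrB big_split /=; lra.
Qed.

End Submodularity.

End Entropy.

Section InformationInequalities.
Variables (d : measure_display) (Omega : measurableType d) (R : realType).
Variable P : probability Omega R.
Local Notation pr := (pr P).
Local Notation entropy := (entropy P).

Local Ltac equiv_rv := let w := fresh "w" in let w' := fresh "w'" in
  let h := fresh "h" in move=> w w'; split => h; congruence.

(* [I(A;B|Q)], by the chain rule. *)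
Definition dmi_cond (K1 K2 K3 : finType) (A : Omega -> K1) (B : Omega -> K2)
    (Q : Omega -> K3) : R :=
  dmi P A (fun w => (B w, Q w)) - dmi P A Q.

Definition cond_entropy (K1 K2 : finType) (X : Omega -> K1) (Y : Omega -> K2) : R :=
  entropy (fun w => (X w, Y w)) - entropy Y.

Lemma dmi_eq_equiv (K1 K2 K3 K4 : finType) (A : Omega -> K1) (B : Omega -> K2)
    (A' : Omega -> K3) (B' : Omega -> K4) : rv A -> rv B -> rv A' -> rv B' ->
  (forall w w', A w = A w' <-> A' w = A' w') ->
  (forall w w', B w = B w' <-> B' w = B' w') -> dmi P A B = dmi P A' B'.
Proof.
move=> hA hB hA' hB' eA eB; rewrite !dmi_entropyE //.
have eAB : entropy (fun w => (A w, B w)) = entropy (fun w => (A' w, B' w)).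
  by apply: entropy_eq_equiv; [rvs|rvs|move=> w w'; split => -[/eA -> /eB ->]].
by rewrite (entropy_eq_equiv P hA hA' eA) (entropy_eq_equiv P hB hB' eB) eAB.
Qed.

Lemma dmi_le_determined (K1 K2 K3 : finType) (A : Omega -> K1) (B : Omega -> K2)
    (B' : Omega -> K3) : rv A -> rv B -> rv B' ->
  (forall w w', B w = B w' -> B' w = B' w') -> dmi P A B' <= dmi P A B.
Proof.
move=> hA hB hB' BB'; rewrite !dmi_entropyE //; have := entropy_submod P hA hB hB'.
have e1 : entropy (fun w => (A w, B w, B' w)) = entropy (fun w => (A w, B w)).
  apply: entropy_eq_equiv; [rvs|rvs|move=> w w'].
  by split => [[-> -> _]|[e1 e2]] //; rewrite e1 e2 (BB' _ _ e2).
have e2 : entropy (fun w => (B w, B' w)) = entropy B.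
  apply: entropy_eq_equiv; [rvs|rvs|move=> w w'].
  by split => [[]|e] //; rewrite e (BB' _ _ e).
rewrite e1 e2; lra.
Qed.

Lemma dmi_le_entropy (K1 K2 : finType) (A : Omega -> K1) (B : Omega -> K2) :
  rv A -> rv B -> dmi P A B <= entropy A.
Proof.
move=> hA hB; rewrite dmi_entropyE //.
have : entropy B <= entropy (fun w => (A w, B w)).
  by apply: (entropy_le_determined P); [rvs|move=> w w' []].
lra.
Qed.

(* [I(ABC;VW|Q) = I(A;VW|Q) + I(B;VW|QA) + I(C;VW|QAB)], of which only two parts are kept. *)
Lemma dmi_cond_chain_le (K1 K2 K3 K4 K5 K6 : finType) (A : Omega -> K1) (B : Omega -> K2)
    (C : Omega -> K3) (V : Omega -> K4) (W : Omega -> K5) (Q : Omega -> K6) :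
  rv A -> rv B -> rv C -> rv V -> rv W -> rv Q ->
  dmi_cond A V Q + dmi_cond C W (fun w => (Q w, A w, B w)) <=
  dmi_cond (fun w => (A w, B w, C w)) (fun w => (V w, W w)) Q.
Proof.
move=> hA hB hC hV hW hQ; rewrite /dmi_cond !dmi_entropyE; try rvs.
have s1 := entropy_submod P hA hW (rv_pair hV hQ).
have s2 := entropy_submod P hB (rv_pair hV hW) (rv_pair hA hQ).
have hABWQ : rv (fun w => (A w, B w, W w, Q w)) by rvs.
have s3 := entropy_submod P hC hV hABWQ.
have e1 : entropy (fun w => (W w, (Q w, A w, B w))) = entropy (fun w => (A w, B w, W w, Q w)).
  by apply: entropy_eq_equiv; [rvs|rvs|equiv_rv].
have e2 : entropy (fun w => (C w, (W w, (Q w, A w, B w)))) =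
          entropy (fun w => (C w, (A w, B w, W w, Q w))).
  by apply: entropy_eq_equiv; [rvs|rvs|equiv_rv].
have e3 : entropy (fun w => (Q w, A w, B w)) = entropy (fun w => (B w, (A w, Q w))).
  by apply: entropy_eq_equiv; [rvs|rvs|equiv_rv].
have e4 : entropy (fun w => (C w, (Q w, A w, B w))) = entropy (fun w => ((A w, B w, C w), Q w)).
  by apply: entropy_eq_equiv; [rvs|rvs|equiv_rv].
have e5 : entropy (fun w => ((V w, W w), Q w)) = entropy (fun w => (W w, (V w, Q w))).
  by apply: entropy_eq_equiv; [rvs|rvs|equiv_rv].
have e6 : entropy (fun w => ((A w, B w, C w), ((V w, W w), Q w))) =
          entropy (fun w => (C w, V w, (A w, B w, W w, Q w))).
  by apply: entropy_eq_equiv; [rvs|rvs|equiv_rv].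
have e7 : entropy (fun w => (A w, W w, (V w, Q w))) =
          entropy (fun w => ((V w, W w), (A w, Q w))).
  by apply: entropy_eq_equiv; [rvs|rvs|equiv_rv].
have e8 : entropy (fun w => (B w, (V w, W w), (A w, Q w))) =
          entropy (fun w => (V w, (A w, B w, W w, Q w))).
  by apply: entropy_eq_equiv; [rvs|rvs|equiv_rv].
rewrite e1 e2 e3 e4 e5 e6; rewrite e7 in s1; rewrite e8 in s2.
lra.
Qed.

Lemma dmi_pair_le_swap (K1 K2 K3 : finType) (A : Omega -> K1) (V : Omega -> K2)
    (Q1 Q2 : Omega -> K3) : rv A -> rv V -> rv Q1 -> rv Q2 ->
  dmi P A (fun w => (V w, Q1 w)) <= dmi P A (fun w => (V w, Q2 w)) + cond_entropy Q1 Q2.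
Proof.
move=> hA hV hQ1 hQ2.
have h1 : dmi P A (fun w => (V w, Q1 w)) <= dmi P A (fun w => (V w, Q1 w, Q2 w)).
  by apply: dmi_le_determined; [rvs|rvs|rvs|move=> w w' [-> ->]].
apply: (le_trans h1); rewrite /cond_entropy !dmi_entropyE; try rvs.
have s1 := entropy_submod P hV hQ1 hQ2.
have k1 : entropy (fun w => (A w, (V w, Q2 w))) <= entropy (fun w => (A w, (V w, Q1 w, Q2 w))).
  by apply: (entropy_le_determined P); [rvs|move=> w w' [-> -> _ ->]].
lra.
Qed.

Lemma cond_entropy_term_le (p q de : R) (b : bool) : 0 <= p -> p <= q -> q <= 1 -> 0 <= de ->
  (if b then q <= p + de else p <= de) -> p * ln q - p * ln p <= de + 2 * Num.sqrt de.
Proof.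
move=> p0 pq q1 de0 hb; have sq0 : 0 <= Num.sqrt de by apply: sqrtr_ge0.
have [->|pn0] := eqVneq p 0; first by rewrite !mul0r subrr addr_ge0 // mulr_ge0.
have pp : 0 < p by rewrite lt_def pn0 p0.
have qp : 0 < q by apply: lt_le_trans pq.
case: b hb => hb.
  have h : ln (q / p) <= q / p - 1 by apply: ln_le_subr1; rewrite divr_gt0.
  rewrite ln_div ?posrE // in h; have := ler_wpM2l (ltW pp) h.
  rewrite (_ : p * (q / p - 1) = q - p); last by field; rewrite gt_eqF.
  lra.
have h1 : p * ln q <= 0 by rewrite mulr_ge0_le0 // ?ln_le0 // ltW.
have h2 := neg_xlnx_le_sqrt p0.
have h3 : Num.sqrt p <= Num.sqrt de by rewrite ler_sqrt.
lra.
Qed.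

Lemma cond_entropy_le_mismatch (K : finType) (Q1 Q2 : Omega -> K) : rv Q1 -> rv Q2 ->
  cond_entropy Q1 Q2 <= (#|K|%:R ^+ 2) *
    (pr [set w | Q1 w <> Q2 w] + 2 * Num.sqrt (pr [set w | Q1 w <> Q2 w])).
Proof.
move=> h1 h2; set de := pr _; have mD := rv_neq h1 h2.
rewrite /cond_entropy; unfold entropy; rewrite sum_prod2 opprK.
have -> : \sum_y pmass P Q2 y * ln (pmass P Q2 y) =
   \sum_x \sum_y pr (Q1 @^-1` [set x] `&` Q2 @^-1` [set y]) * ln (pmass P Q2 y).
  rewrite exchange_big /=; apply: eq_bigr => y _; rewrite -mulr_suml; congr (_ * _).
  by rewrite /pmass -(pr_partition P h1 (h2 y)); apply: eq_bigr => x _; rewrite setIC.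
rewrite addrC -sumrB; under eq_bigr do rewrite -sumrB.
have -> : #|K|%:R ^+ 2 * (de + 2 * Num.sqrt de) = \sum_(x : K) \sum_(y : K) (de + 2 * Num.sqrt de).
  by rewrite !sumr_const -mulrnA -[RHS]mulr_natr natrM expr2 mulrC.
apply: ler_sum => x _; apply: ler_sum => y _; rewrite pmass_pair.
have mxy : measurable (Q1 @^-1` [set x] `&` Q2 @^-1` [set y]) by apply: measurableI.
apply: (@cond_entropy_term_le _ _ _ (x == y)); rewrite ?pr_ge0 ?pr_le1 //.
  by apply: pr_le => // w [].
case: eqP => [<-|nxy]; last by apply: pr_le => // w /= [-> ->]; apply/eqP/eqP.
have sub : Q2 @^-1` [set x] `<=` (Q1 @^-1` [set x] `&` Q2 @^-1` [set x]) `|` [set w | Q1 w <> Q2 w].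
  move=> w /= Q2w; have [|ne] := eqVneq (Q1 w) x; first by left.
  by right; rewrite Q2w; apply/eqP.
have mxx : measurable (Q1 @^-1` [set x] `&` Q2 @^-1` [set x]) by apply: measurableI.
apply: le_trans (pr_le P (h2 x) (measurableU _ _ mxx mD) sub) _.
exact: prU_le.
Qed.

End InformationInequalities.

(** * Information with an arbitrary conditioning object *)

Lemma ereal_supD_le (R : realType) (S1 S2 : set (\bar R)) (M : \bar R) :
  (exists x, S1 x) -> (exists y, S2 y) ->
  (forall x, S1 x -> x \is a fin_num) -> (forall y, S2 y -> y \is a fin_num) ->
  (forall x y, S1 x -> S2 y -> (x + y <= M)%E) -> (ereal_sup S1 + ereal_sup S2 <= M)%E.
Proof.
move=> [x0 Sx0] [y0 Sy0] f1 f2 H.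
case: M H => [m| |] H; last first.
- have := H x0 y0 Sx0 Sy0.
  by rewrite -(fineK (f1 _ Sx0)) -(fineK (f2 _ Sy0)) -EFinD leeNy_eq.
- exact: leey.
have ub1 y : S2 y -> (ereal_sup S1 <= (m - fine y)%:E)%E.
  move=> Sy; apply: ge_ereal_sup => x Sx; have := H x y Sx Sy.
  by rewrite -(fineK (f1 _ Sx)) -(fineK (f2 _ Sy)) -EFinD !lee_fin => h; lra.
have fs : ereal_sup S1 \is a fin_num.
  rewrite fin_numElt; apply/andP; split.
    apply: (@lt_le_trans _ _ x0); last exact: ereal_sup_ubound.
    by rewrite -(fineK (f1 _ Sx0)) ltNyr.
  by apply: le_lt_trans (ub1 _ Sy0) _; exact: ltry.
set s := fine (ereal_sup S1).
have ub2 : (ereal_sup S2 <= (m - s)%:E)%E.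
  apply: ge_ereal_sup => y Sy; have := ub1 y Sy.
  by rewrite -(fineK fs) -/s -(fineK (f2 _ Sy)) !lee_fin /= => h; lra.
rewrite -(fineK fs) -/s.
apply: le_trans (_ : (s%:E + (m - s)%:E <= _)%E); first by rewrite leeD2l.
by rewrite -EFinD lee_fin; lra.
Qed.

Section QuantizedInformation.
Variables (d : measure_display) (Omega : measurableType d) (R : realType).
Variable P : probability Omega R.
Local Notation entropy := (entropy P).

Definition sup_dmi (G : set (set Omega)) (K : finType) (A : Omega -> K) : \bar R :=
  ereal_sup [set x | exists n (q : Omega -> 'I_n),
       quantization G q /\ x = (dmi P A q)%:E].

Definition sup_dmi_pair (G : set (set Omega)) (K1 K2 : finType) (A : Omega -> K1)
    (B : Omega -> K2) : \bar R :=
  ereal_sup [set x | exists n (q : Omega -> 'I_n),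
       quantization G q /\ x = (dmi P A (fun w => (B w, q w)))%:E].

Lemma cmi_finE G (K1 K2 : finType) (A : Omega -> K1) (B : Omega -> K2) :
  cmi_fin P G A B = (sup_dmi_pair G A B - sup_dmi G A)%E.
Proof. by []. Qed.

Variable G : set (set Omega).
Hypotheses (sG : sigma_algebra setT G) (mG : G `<=` measurable).

Lemma sup_dmi_ub (K K' : finType) (A : Omega -> K) (h : Omega -> K') :
  rv A -> level_meas G h -> ((dmi P A h)%:E <= sup_dmi G A)%E.
Proof.
move=> hA hh; have rh := level_meas_sub mG hh.
apply: ereal_sup_ubound; exists #|K'|, (enum_rank \o h).
split; first exact: quantization_enum_rank.
congr EFin; apply: dmi_eq_equiv => //; first exact: rv_comp.
by move=> w w'; rewrite enum_rank_compE.
Qed.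

Lemma sup_dmi_pair_ub (K K' K'' : finType) (A : Omega -> K) (B : Omega -> K'')
    (h : Omega -> K') : rv A -> rv B -> level_meas G h ->
  ((dmi P A (fun w => (B w, h w)))%:E <= sup_dmi_pair G A B)%E.
Proof.
move=> hA hB hh; have rh := level_meas_sub mG hh.
apply: ereal_sup_ubound; exists #|K'|, (enum_rank \o h).
split; first exact: quantization_enum_rank.
have hc : rv (enum_rank \o h) by exact: rv_comp.
congr EFin; apply: dmi_eq_equiv; rvs; first by move=> w w'.
by move=> w w'; split => /= [[-> ->]|[-> /enum_rank_inj ->]].
Qed.

Lemma sup_dmi_fin_num (K : finType) (A : Omega -> K) : rv A -> sup_dmi G A \is a fin_num.
Proof.
move=> hA; rewrite fin_numElt; apply/andP; split.
  apply: (@lt_le_trans _ _ (dmi P A (fun _ => tt))%:E); first exact: ltNyr.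
  by apply: sup_dmi_ub => //; exact: level_meas_cst.
apply: (@le_lt_trans _ _ (entropy A)%:E); last exact: ltry.
apply: ge_ereal_sup => x [n [q [qq ->]]]; rewrite lee_fin.
by apply: dmi_le_entropy => //; exact: level_meas_sub mG qq.
Qed.

Lemma sup_dmi_pair_fin_num (K K' : finType) (A : Omega -> K) (B : Omega -> K') :
  rv A -> rv B -> sup_dmi_pair G A B \is a fin_num.
Proof.
move=> hA hB; rewrite fin_numElt; apply/andP; split.
  apply: (@lt_le_trans _ _ (dmi P A (fun w => (B w, tt)))%:E); first exact: ltNyr.
  by apply: sup_dmi_pair_ub => //; exact: level_meas_cst.
apply: (@le_lt_trans _ _ (entropy A)%:E); last exact: ltry.
apply: ge_ereal_sup => x [n [q [qq ->]]]; rewrite lee_fin.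
by apply: dmi_le_entropy => //; apply: rv_pair => //; exact: level_meas_sub mG qq.
Qed.

Lemma dmi_le_sup_dmi (K K' : finType) (A : Omega -> K) (h : Omega -> K') :
  rv A -> level_meas G h -> dmi P A h <= fine (sup_dmi G A).
Proof. by move=> hA hh; rewrite -lee_fin fineK ?sup_dmi_fin_num ?sup_dmi_ub. Qed.

Lemma dmi_le_sup_dmi_pair (K K' K'' : finType) (A : Omega -> K) (B : Omega -> K'')
    (h : Omega -> K') : rv A -> rv B -> level_meas G h ->
  dmi P A (fun w => (B w, h w)) <= fine (sup_dmi_pair G A B).
Proof. by move=> hA hB hh; rewrite -lee_fin fineK ?sup_dmi_pair_fin_num ?sup_dmi_pair_ub. Qed.

Lemma sup_dmi_pair_approx (K K' : finType) (A : Omega -> K) (B : Omega -> K') (e : R) :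
  rv A -> rv B -> 0 < e ->
  exists n (q : Omega -> 'I_n), quantization G q /\
     fine (sup_dmi_pair G A B) - e < dmi P A (fun w => (B w, q w)).
Proof.
move=> hA hB e0; have fin := sup_dmi_pair_fin_num hA hB.
have [_ [n [q [qq ->]]] h] := ub_ereal_sup_adherent e0 fin.
by exists n, q; split => //; rewrite -lte_fin EFinB fineK.
Qed.

Lemma sup_dmi_approx (K : finType) (A : Omega -> K) (e : R) : rv A -> 0 < e ->
  exists n (q : Omega -> 'I_n), quantization G q /\ fine (sup_dmi G A) - e < dmi P A q.
Proof.
move=> hA e0; have fin := sup_dmi_fin_num hA.
have [_ [n [q [qq ->]]] h] := ub_ereal_sup_adherent e0 fin.
by exists n, q; split => //; rewrite -lte_fin EFinB fineK.
Qed.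

End QuantizedInformation.

(** * Approximation by the generated algebra *)

Lemma pr_bigcup_approx (d : measure_display) (Omega : measurableType d) (R : realType)
    (P : probability Omega R) (A : (set Omega)^nat) (e : R) :
  (forall k, measurable (A k)) -> 0 < e ->
  exists N, pr P (\bigcup_k A k `\` \big[setU/set0]_(i < N.+1) A i) <= e.
Proof.
move=> mA e0; pose F N := \big[setU/set0]_(i < N.+1) A i.
have mUA : measurable (\bigcup_k A k) by apply: bigcupT_measurable.
have mF N : measurable (F N) by apply: bigsetU_measurable.
have ndF : nondecreasing_seq F.
  by move=> m n mn; apply/subsetPset/subset_bigsetU; rewrite ltnS.
have UF : \bigcup_N F N = \bigcup_k A k := bigcup_bigsetU_bigcup A.
have cv := nondecreasing_cvg_mu mF (eq_ind_r _ mUA UF) ndF.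
rewrite UF in cv; have /fine_cvgP[_ {}cv] : (fun N => P (F N)) @ \oo --> (pr P (\bigcup_k A k))%:E.
  by rewrite -(prE P mUA); exact: cv.
have [N _ /(_ N (leqnn N)) /= hN] := (cvgrPdist_lt _ _).1 cv e e0.
exists N; have FA : F N `<=` \bigcup_k A k by rewrite -UF; exact: bigcup_sup.
have dj : F N `&` (\bigcup_k A k `\` F N) = set0 by apply/seteqP; split => w // [? []].
have := prU P (mF N) (measurableD mUA (mF N)) dj; rewrite setDUK // => hU.
by apply: le_trans (ltW hN); rewrite hU addrC addKr ler_norm.
Qed.

Section JoinApproximation.
Variables (d : measure_display) (Omega : measurableType d) (R : realType).
Variable P : probability Omega R.
Local Notation pr := (pr P).
Variables (GW GU : set (set Omega)).
Hypotheses (sW : sigma_algebra setT GW) (sU : sigma_algebra setT GU).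
Hypotheses (mW : GW `<=` measurable) (mU : GU `<=` measurable).

(* The algebra generated by [GW `|` GU]: sets decided by one finite quantization of each. *)
Definition in_join_algebra (S : set Omega) := exists (K1 K2 : finType) (q : Omega -> K1)
  (r : Omega -> K2) (B : pred (K1 * K2)),
  [/\ level_meas GW q, level_meas GU r & S = [set w | B (q w, r w)]].

Definition join_approx (S : set Omega) := measurable S /\
  forall e : R, 0 < e -> exists S0, in_join_algebra S0 /\ pr (S `+` S0) <= e.

Lemma in_join_algebraW S : GW S -> in_join_algebra S.
Proof.
move=> hS; exists bool, unit, (fun w => `[< S w >]), (fun _ => tt), (fun u => u.1).
split; [exact: level_meas_indic|exact: level_meas_cst|].
by apply/seteqP; split => w /=; move/asboolP.
Qed.

Lemma in_join_algebraU S : GU S -> in_join_algebra S.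
Proof.
move=> hS; exists unit, bool, (fun _ => tt), (fun w => `[< S w >]), (fun u => u.2).
split; [exact: level_meas_cst|exact: level_meas_indic|].
by apply/seteqP; split => w /=; move/asboolP.
Qed.

Lemma in_join_algebra0 : in_join_algebra set0.
Proof.
exists unit, unit, (fun _ => tt), (fun _ => tt), pred0.
by split; [exact: level_meas_cst|exact: level_meas_cst|apply/seteqP; split].
Qed.

Lemma in_join_algebraC S : in_join_algebra S -> in_join_algebra (~` S).
Proof.
move=> [K1 [K2 [q [r [B [hq hr ->]]]]]]; exists K1, K2, q, r, (predC B).
by split => //; apply/seteqP; split => w /=; move/negP.
Qed.

Lemma in_join_algebra_setU S S' :
  in_join_algebra S -> in_join_algebra S' -> in_join_algebra (S `|` S').
Proof.
move=> [K1 [K2 [q [r [B [hq hr ->]]]]]] [K1' [K2' [q' [r' [B' [hq' hr' ->]]]]]].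
exists (K1 * K1')%type, (K2 * K2')%type, (fun w => (q w, q' w)), (fun w => (r w, r' w)),
  (fun u => B (u.1.1, u.2.1) || B' (u.1.2, u.2.2)).
split; [exact: level_meas_pair|exact: level_meas_pair|].
by apply/seteqP; split => w /=; move/orP.
Qed.

Lemma in_join_algebra_bigU n (F : nat -> set Omega) :
  (forall k, (k < n)%N -> in_join_algebra (F k)) ->
  in_join_algebra (\big[setU/set0]_(k < n) F k).
Proof.
elim: n => [|n IH] H; first by rewrite big_ord0; exact: in_join_algebra0.
rewrite big_ord_recr /=; apply: in_join_algebra_setU; last exact: H.
by apply: IH => k kn; apply: H; exact: ltnW.
Qed.

Lemma in_join_algebra_measurable S : in_join_algebra S -> measurable S.
Proof.
move=> [K1 [K2 [q [r [B [hq hr ->]]]]]].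
have := rv_preimage [set u | B u] (rv_pair (level_meas_sub mW hq) (level_meas_sub mU hr)).
by rewrite (_ : _ @^-1` _ = [set w | B (q w, r w)]).
Qed.

Lemma in_join_algebra_common n (F : nat -> set Omega) :
  (forall k, (k < n)%N -> in_join_algebra (F k)) ->
  exists (K1 K2 : finType) (q : Omega -> K1) (r : Omega -> K2) (B : nat -> pred (K1 * K2)),
    [/\ level_meas GW q, level_meas GU r &
        forall k, (k < n)%N -> F k = [set w | B k (q w, r w)]].
Proof.
elim: n => [|n IH] H.
  exists unit, unit, (fun _ => tt), (fun _ => tt), (fun _ => pred0).
  by split; [exact: level_meas_cst|exact: level_meas_cst|].
have [K1 [K2 [q [r [B [hq hr hB]]]]]] := IH (fun k kn => H k (ltnW kn)).
have [K1' [K2' [q' [r' [B' [hq' hr' hB']]]]]] := H n (ltnSn n).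
exists (K1 * K1')%type, (K2 * K2')%type, (fun w => (q w, q' w)), (fun w => (r w, r' w)),
  (fun k u => if (k < n)%N then B k (u.1.1, u.2.1) else B' (u.1.2, u.2.2)).
split; [exact: level_meas_pair|exact: level_meas_pair|].
move=> k; rewrite ltnS leq_eqVlt => /orP[/eqP ->|kn]; first by rewrite ltnn hB'.
by rewrite kn hB.
Qed.

Let join_approx_setC A : join_approx A -> join_approx (setT `\` A).
Proof.
move=> [mA HA]; split; first exact: measurableD.
move=> e e0; have [S0 [aS0 hS0]] := HA e e0; exists (~` S0).
split; first exact: in_join_algebraC.
rewrite (_ : _ `+` _ = A `+` S0) //.
by rewrite /setY setTD !setDE !setCK setUC; congr (_ `|` _); rewrite setIC.
Qed.

Let join_approx_bigcup (A : (set Omega)^nat) :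
  (forall k, join_approx (A k)) -> join_approx (\bigcup_k A k).
Proof.
move=> HA; have mA k := (HA k).1; have mUA : measurable (\bigcup_k A k).
  exact: bigcupT_measurable.
split => // e e0; have e2 : 0 < e / 2 by rewrite divr_gt0.
have [N hN] := pr_bigcup_approx P mA e2.
pose e' := e / 2 / (N.+1)%:R; have e'0 : 0 < e' by rewrite !divr_gt0 ?ltr0n.
have [S hS] := choice (fun k => (HA k).2 e' e'0).
have mS k : measurable (S k) := in_join_algebra_measurable (hS k).1.
exists (\big[setU/set0]_(i < N.+1) S i).
split; first by apply: in_join_algebra_bigU => k _; case: (hS k).
pose D1 := \bigcup_k A k `\` \big[setU/set0]_(i < N.+1) A i.
pose D2 := \big[setU/set0]_(i < N.+1) (A i `+` S i).
have mD1 : measurable D1 by apply: measurableD => //; exact: bigsetU_measurable.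
have mD2 : measurable D2 by apply: bigsetU_measurable => i _; exact: measurableY.
have sub : \bigcup_k A k `+` \big[setU/set0]_(i < N.+1) S i `<=` D1 `|` D2.
  rewrite /D1 /D2 -!bigcup_mkord -(bigcup_mkord _ (fun i => A i `+` S i)) => w.
  case=> [[[k _ Akw] nS]|[[k kN Skw] nA]].
    have [[i iN Aiw]|nF] := pselect ((\bigcup_(i < N.+1) A i) w).
      by right; exists i => //; left; split => // Siw; apply: nS; exists i.
    by left; split => //; exists k.
  by right; exists k => //; right; split => // Akw; apply: nA; exists k.
have mSU : measurable (\big[setU/set0]_(i < N.+1) S i) by exact: bigsetU_measurable.
apply: le_trans (pr_le P (measurableY mUA mSU) (measurableU _ _ mD1 mD2) sub) _.
apply: le_trans (prU_le P mD1 mD2) _.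
have : pr D2 <= e / 2.
  apply: le_trans (pr_bigU_le P N.+1 (fun i => measurableY (mA i) (mS i))) _.
  apply: (@le_trans _ _ (\sum_(i < N.+1) e')); first by apply: ler_sum => i _; exact: (hS i).2.
  by rewrite sumr_const card_ord /e' -[X in X <= _]mulr_natr divfK ?lt0r_neq0 ?ltr0n.
lra.
Qed.

Lemma join_approx_sigma : sigma_algebra setT join_approx.
Proof.
split; [|exact: join_approx_setC|exact: join_approx_bigcup].
split => // e e0; exists set0; split; first exact: in_join_algebra0.
by rewrite setY0 pr_set0 ltW.
Qed.

Lemma sigma_join_approx : <<s GW `|` GU >> `<=` join_approx.
Proof.
apply: smallest_sub; first exact: join_approx_sigma.
move=> S GS; have aS : in_join_algebra S by case: GS => [/in_join_algebraW|/in_join_algebraU].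
split => [|e e0]; first exact: in_join_algebra_measurable.
by exists S; rewrite setYK pr_set0 ltW.
Qed.

Lemma quantization_join_approx (GW' : set (set Omega)) : GW' `<=` <<s GW `|` GU >> ->
  forall n (q : Omega -> 'I_n), quantization GW' q -> forall e : R, 0 < e ->
  exists (K1 K2 : finType) (q0 : Omega -> K1) (r : Omega -> K2) (g : K1 * K2 -> 'I_n),
    [/\ level_meas GW q0, level_meas GU r & pr [set w | q w <> g (q0 w, r w)] <= e].
Proof.
move=> sW' n q hq e e0.
have hD k : join_approx (q @^-1` [set k]) by apply: sigma_join_approx; apply: sW'.
have [w0] := probability_inhabited P.
have n0 : 0 < n%:R :> R by rewrite ltr0n (leq_ltn_trans (leq0n _) (ltn_ord (q w0))).
pose e' := e / n%:R; have e'0 : 0 < e' by rewrite divr_gt0.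
have [S hS] := choice (fun k : 'I_n => (hD k).2 e' e'0).
pose Sn (k : nat) := S (insubd (q w0) k).
have [K1 [K2 [q0 [r [B [h1 h2 hB]]]]]] :=
  @in_join_algebra_common n Sn (fun k _ => (hS _).1).
pose g u := odflt (q w0) [pick k : 'I_n | B k u].
exists K1, K2, q0, r, g; split => //.
have SB (k : 'I_n) : S k = [set w | B k (q0 w, r w)] by rewrite -(hB k (ltn_ord k)) /Sn valKd.
pose D (k : nat) := q @^-1` [set insubd (q w0) k] `+` Sn k.
have mq : rv q by move=> k; exact: (hD k).1.
have mD k : measurable (D k).
  by apply: measurableY; [exact: mq|exact: in_join_algebra_measurable (hS _).1].
(* at a mismatch, [w] is misclassified by the approximation either of its own level
   set or of the one picked by [g] *)
have sub : [set w | q w <> g (q0 w, r w)] `<=` \big[setU/set0]_(k < n) D k.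
  rewrite -bigcup_mkord => w /= ne.
  have [Bw|nBw] := boolP (B (q w) (q0 w, r w)).
    move: ne; rewrite /g; case: pickP => [j Bj|/(_ (q w))]; last by rewrite Bw.
    move=> /= ne; exists (val j); first exact: ltn_ord.
    right; rewrite /D /Sn valKd; split; first by rewrite SB.
    by move=> /= qj; apply: ne; rewrite qj.
  exists (val (q w)); first exact: ltn_ord.
  left; rewrite /D /Sn valKd; split => //=.
  by rewrite SB /=; exact/negP.
have mne : measurable [set w | q w <> g (q0 w, r w)].
  apply: (rv_neq mq); apply: rv_comp.
  by apply: rv_pair; [exact: level_meas_sub mW h1|exact: level_meas_sub mU h2].
have mDU : measurable (\big[setU/set0]_(k < n) D k) by apply: bigsetU_measurable => k _.
apply: le_trans (pr_le P mne mDU sub) _; apply: le_trans (pr_bigU_le P n mD) _.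
apply: (@le_trans _ _ (\sum_(k < n) e')).
  by apply: ler_sum => k _; rewrite /D /Sn valKd; exact: (hS k).2.
by rewrite sumr_const card_ord /e' -[X in X <= _]mulr_natr divfK ?lt0r_neq0.
Qed.

End JoinApproximation.

(** * Superadditivity of the conditional information *)

Lemma exists_sqrt_small (R : realType) (c e : R) : 0 <= c -> 0 < e ->
  exists de : R, 0 < de /\ c * (de + 2 * Num.sqrt de) <= e.
Proof.
move=> c0 e0; pose m := Num.min e 1.
have m0 : 0 < m by rewrite lt_min e0 ltr01.
have me : m <= e by rewrite ge_min lexx.
have m1 : m <= 1 by rewrite ge_min lexx orbT.
have c1 : 0 < 3 * (c + 1) by rewrite mulr_gt0 // ltr_wpDl.
pose u := m / (3 * (c + 1)); have u0 : 0 < u by rewrite divr_gt0.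
have hu : u * (3 * (c + 1)) = m by rewrite divfK // gt_eqF.
exists (u ^+ 2); split; first by rewrite exprn_gt0.
rewrite sqrtr_sqr ger0_norm ?ltW //.
have u1 : u <= 1 by nra.
have : u ^+ 2 <= u by rewrite expr2; nra.
nra.
Qed.

Lemma dmi_cond_enum_rank (d : measure_display) (Omega : measurableType d) (R : realType)
    (P : probability Omega R) (K1 K2 K3 : finType) (A : Omega -> K1) (B : Omega -> K2)
    (Q : Omega -> K3) : rv A -> rv B -> rv Q ->
  dmi_cond P (enum_rank \o A) (enum_rank \o B) Q = dmi_cond P A B Q.
Proof.
move=> hA hB hQ; have hA' := rv_comp enum_rank hA; have hB' := rv_comp enum_rank hB.
rewrite /dmi_cond; congr (_ - _); apply: dmi_eq_equiv; rvs;
  try by move=> w w'; rewrite ?enum_rank_compE.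
by move=> w w'; split => /= [[/enum_rank_inj -> ->]|[-> ->]].
Qed.

Section CmiSplit.
Variables (d : measure_display) (Omega : measurableType d) (R : realType).
Variable P : probability Omega R.
Local Notation sup_dmi := (sup_dmi P).
Local Notation sup_dmi_pair := (sup_dmi_pair P).

(* In the application [U = Y_a^b], [U1 = Y_a^s], [U2 = Y_s^b], [V' = X_0^s], [V = X_0^b],
   [W = Y_0^a] and [W' = Y_0^s], for [a <= s <= b]. *)
Variables (GU GU1 GU2 GV' GV GW GW' : set (set Omega)).
Hypotheses (sU : sigma_algebra setT GU) (sU1 : sigma_algebra setT GU1)
  (sU2 : sigma_algebra setT GU2) (sV' : sigma_algebra setT GV') (sV : sigma_algebra setT GV)
  (sW : sigma_algebra setT GW) (sW' : sigma_algebra setT GW').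
Hypotheses (mU : GU `<=` measurable) (mU1 : GU1 `<=` measurable) (mU2 : GU2 `<=` measurable)
  (mV' : GV' `<=` measurable) (mV : GV `<=` measurable) (mW : GW `<=` measurable)
  (mW' : GW' `<=` measurable).
Hypotheses (U1U : GU1 `<=` GU) (U2U : GU2 `<=` GU) (V'V : GV' `<=` GV) (WW' : GW `<=` GW')
  (U1W' : GU1 `<=` GW') (W'WU1 : GW' `<=` <<s GW `|` GU1 >>).

(* Up to [e], a quantization of [W'] may be replaced by one that factors through
   quantizations of [W] and [U1]: the price is the conditional entropy of the two
   quantizations, small when they rarely differ. *)
Lemma dmi_join_approx (K1 K2 : finType) (A : Omega -> K1) (B : Omega -> K2) n
    (q : Omega -> 'I_n) (e : R) : rv A -> rv B -> quantization GW' q -> 0 < e ->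
  exists (K3 K4 : finType) (q0 : Omega -> K3) (r : Omega -> K4) (g : K3 * K4 -> 'I_n),
    [/\ level_meas GW q0, level_meas GU1 r &
        dmi P A (fun w => (B w, q w)) <= dmi P A (fun w => (B w, g (q0 w, r w))) + e].
Proof.
move=> hA hB qq e0; have rq : rv q := level_meas_sub mW' qq.
have [de [de0 hde]] := exists_sqrt_small (sqr_ge0 (n%:R : R)) e0.
have [K3 [K4 [q0 [r [g [hq0 hr hpr]]]]]] :=
  quantization_join_approx P sW sU1 mW mU1 W'WU1 qq de0.
exists K3, K4, q0, r, g; split => //.
have rg : rv (fun w => g (q0 w, r w)).
  apply: (rv_comp g); apply: rv_pair.
  - exact: level_meas_sub mW hq0.
  - exact: level_meas_sub mU1 hr.
apply: le_trans (dmi_pair_le_swap P hA hB rq rg) _; rewrite lerD2l.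
apply: le_trans (cond_entropy_le_mismatch P rq rg) _; rewrite card_ord.
apply: le_trans hde; apply: ler_wpM2l; first exact: sqr_ge0.
by apply: lerD => //; rewrite ler_pM2l // ler_sqrt // ltW.
Qed.

(* Chain rule, conditioning on [Q = (qJ, q0, q1)], a quantization of [W] refining
   [qJ], [q0] and [q1]; [(Q, a1, r)] is then a quantization of [W']. *)
Lemma dmi_split_le_sup n1 m1 n2 m2 (a1 : Omega -> 'I_n1) (v' : Omega -> 'I_m1)
    (a2 : Omega -> 'I_n2) (v : Omega -> 'I_m2) (K0 Kr Kg K1 KJ : finType)
    (q0 : Omega -> K0) (r : Omega -> Kr) (g : K0 * Kr -> Kg) (q1 : Omega -> K1)
    (qJ : Omega -> KJ) :
  quantization GU1 a1 -> quantization GV' v' -> quantization GU2 a2 -> quantization GV v ->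
  level_meas GU1 r -> level_meas GW q0 -> level_meas GW q1 -> level_meas GW qJ ->
  dmi P a1 (fun w => (v' w, q1 w)) - fine (sup_dmi GW a1) +
    (dmi P a2 (fun w => (v w, g (q0 w, r w))) - fine (sup_dmi GW' a2)) <=
  fine (sup_dmi_pair GW (enum_rank \o (fun w => (a1 w, r w, a2 w)))
                        (enum_rank \o (fun w => (v' w, v w)))) -
  dmi P (enum_rank \o (fun w => (a1 w, r w, a2 w))) qJ.
Proof.
move=> qa1 qv' qa2 qv hr hq0 hq1 hqJ.
set QU := enum_rank \o _; set QV := enum_rank \o _.
have ra1 : rv a1 := level_meas_sub mU1 qa1; have rv' : rv v' := level_meas_sub mV' qv'.
have ra2 : rv a2 := level_meas_sub mU2 qa2; have rv_ : rv v := level_meas_sub mV qv.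
have rr : rv r := level_meas_sub mU1 hr; have rq0 : rv q0 := level_meas_sub mW hq0.
have rq1 : rv q1 := level_meas_sub mW hq1; have rqJ : rv qJ := level_meas_sub mW hqJ.
have [rT3 rT2] : rv (fun w => (a1 w, r w, a2 w)) /\ rv (fun w => (v' w, v w)) by split; rvs.
have [rQU rQV] : rv QU /\ rv QV by split; exact: rv_comp.
pose Q := fun w => (qJ w, q0 w, q1 w).
have lQ : level_meas GW Q by do 2?apply: (level_meas_pair sW).
have rQ : rv Q := level_meas_sub mW lQ.
have rg : rv (g \o (fun w => (q0 w, r w))) by apply: rv_comp; rvs.
have chain := dmi_cond_chain_le P ra1 rr ra2 rv' rv_ rQ.
rewrite -(dmi_cond_enum_rank P rT3 rT2 rQ) /dmi_cond -/QU -/QV in chain.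
have ha : dmi P a1 (fun w => (v' w, q1 w)) <= dmi P a1 (fun w => (v' w, Q w)).
  by apply: dmi_le_determined; try rvs; move=> w w' [-> _ _ ->].
have hb : dmi P a1 Q <= fine (sup_dmi GW a1) by exact: dmi_le_sup_dmi.
have hc : dmi P a2 (fun w => (v w, g (q0 w, r w))) <=
          dmi P a2 (fun w => (v w, (Q w, a1 w, r w))).
  by apply: dmi_le_determined; try rvs; move=> w w' [-> [_ e0 _] _ e2]; rewrite e0 e2.
have hd : dmi P a2 (fun w => (Q w, a1 w, r w)) <= fine (sup_dmi GW' a2).
  apply: dmi_le_sup_dmi => //; apply: (level_meas_pair sW'); first apply: (level_meas_pair sW').
  - exact: level_meas_sub WW' lQ.
  - exact: level_meas_sub U1W' qa1.
  - exact: level_meas_sub U1W' hr.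
have he : dmi P QU (fun w => (QV w, Q w)) <= fine (sup_dmi_pair GW QU QV).
  exact: dmi_le_sup_dmi_pair.
have hf : dmi P QU qJ <= dmi P QU Q by apply: dmi_le_determined; try rvs; move=> w w' [-> _ _].
lra.
Qed.

Lemma cmi_fin_split_le n1 m1 n2 m2 (a1 : Omega -> 'I_n1) (v' : Omega -> 'I_m1)
    (a2 : Omega -> 'I_n2) (v : Omega -> 'I_m2) :
  quantization GU1 a1 -> quantization GV' v' -> quantization GU2 a2 -> quantization GV v ->
  (cmi_fin P GW a1 v' + cmi_fin P GW' a2 v <= cmi P GU GV GW)%E.
Proof.
move=> qa1 qv' qa2 qv.
have ra1 : rv a1 := level_meas_sub mU1 qa1; have rv' : rv v' := level_meas_sub mV' qv'.
have ra2 : rv a2 := level_meas_sub mU2 qa2; have rv_ : rv v := level_meas_sub mV qv.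
rewrite !cmi_finE.
rewrite -(fineK (sup_dmi_pair_fin_num P sW mW ra1 rv')) -(fineK (sup_dmi_fin_num P sW mW ra1)).
rewrite -(fineK (sup_dmi_pair_fin_num P sW' mW' ra2 rv_)).
rewrite -(fineK (sup_dmi_fin_num P sW' mW' ra2)) -!EFinB -EFinD.
apply/lee_addgt0Pr => e e0; pose eps := e / 4; have eps0 : 0 < eps by rewrite divr_gt0.
have [nq1 [q1 [qq1 hq1]]] := sup_dmi_pair_approx P sW mW ra1 rv' eps0.
have [nq' [q' [qq' hq']]] := sup_dmi_pair_approx P sW' mW' ra2 rv_ eps0.
have [K0 [Kr [q0 [r [g [hq0 hr hq'']]]]]] := dmi_join_approx ra2 rv_ qq' eps0.
pose QU := enum_rank \o (fun w => (a1 w, r w, a2 w)).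
pose QV := enum_rank \o (fun w => (v' w, v w)).
have qQU : quantization GU QU.
  apply: quantization_enum_rank; apply: (level_meas_pair sU); first apply: (level_meas_pair sU).
  - exact: level_meas_sub U1U qa1.
  - exact: level_meas_sub U1U hr.
  - exact: level_meas_sub U2U qa2.
have qQV : quantization GV QV.
  apply: quantization_enum_rank; apply: (level_meas_pair sV) => //.
  exact: level_meas_sub V'V qv'.
have rQU : rv QU := level_meas_sub mU qQU.
have rQV : rv QV := level_meas_sub mV qQV.
have [nJ [qJ [qqJ hqJ]]] := sup_dmi_approx P sW mW rQU eps0.
have step := dmi_split_le_sup g qa1 qv' qa2 qv hr hq0 qq1 qqJ.
apply: le_trans (_ : cmi_fin P GW QU QV + e%:E <= _)%E; last first.
  rewrite leeD2r //; apply: ereal_sup_ubound.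
  by exists #|{: 'I_n1 * Kr * 'I_n2}|, #|{: 'I_m1 * 'I_m2}|, QU, QV.
rewrite cmi_finE -(fineK (sup_dmi_pair_fin_num P sW mW rQU rQV)).
rewrite -(fineK (sup_dmi_fin_num P sW mW rQU)) -EFinB -EFinD lee_fin.
rewrite /eps in hq1 hq' hqJ hq''; lra.
Qed.

Lemma cmi_split_le : (cmi P GU1 GV' GW + cmi P GU2 GV GW' <= cmi P GU GV GW)%E.
Proof.
have ne (GA GB G : set (set Omega)) : sigma_algebra setT GA -> sigma_algebra setT GB ->
    exists x, [set x | exists n m (qu : Omega -> 'I_n) (qv : Omega -> 'I_m),
      quantization GA qu /\ quantization GB qv /\ x = cmi_fin P G qu qv] x.
  move=> sA sB; eexists; exists #|{: unit}|, #|{: unit}|, (enum_rank \o (fun _ => tt)),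
    (enum_rank \o (fun _ => tt)).
  by split; [|split]; try exact: quantization_enum_rank (level_meas_cst _ tt).
have fin (GA GB G : set (set Omega)) : sigma_algebra setT G -> G `<=` measurable ->
    GA `<=` measurable -> GB `<=` measurable -> forall x,
    [set x | exists n m (qu : Omega -> 'I_n) (qv : Omega -> 'I_m),
      quantization GA qu /\ quantization GB qv /\ x = cmi_fin P G qu qv] x ->
    x \is a fin_num.
  move=> sG mG mA mB _ [n [m [qu [qv [hu [hv ->]]]]]]; rewrite cmi_finE fin_numB.
  have [ru rv] := (level_meas_sub mA hu, level_meas_sub mB hv).
  by rewrite (sup_dmi_pair_fin_num P sG mG ru rv) (sup_dmi_fin_num P sG mG ru).
apply: ereal_supD_le; [exact: ne|exact: ne|exact: fin sW mW mU1 mV'|exact: fin sW' mW' mU2 mV|].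
by move=> x y [n1 [m1 [a1 [v' [h1 [h2 ->]]]]]] [n2 [m2 [a2 [v [h3 [h4 ->]]]]]];
  exact: cmi_fin_split_le.
Qed.

End CmiSplit.

(** * Refinement of partitions *)

Section ChainSum.
Variables (R : realType) (f : R -> R -> \bar R).
Hypothesis f_split : forall a s b : R, 0 <= a -> a <= s -> s <= b ->
  (f a s + f s b <= f a b)%E.

Fixpoint chain_sum (s : seq R) : \bar R :=
  if s is x :: ((y :: _) as s') then (f x y + chain_sum s')%E else 0%E.

Let lt_transitive : transitive (fun x y : R => x < y).
Proof. by move=> y x z; apply: lt_trans. Qed.

Lemma chain_sum_cons2 x y s : chain_sum (x :: y :: s) = (f x y + chain_sum (y :: s))%E.
Proof. by []. Qed.

Lemma chain_sum_cat x m y r :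
  chain_sum (x :: m ++ y :: r) = (chain_sum (x :: rcons m y) + chain_sum (y :: r))%E.
Proof.
elim: m x => [|a m IH] x; first by rewrite /= adde0.
by rewrite cat_cons rcons_cons !chain_sum_cons2 IH addeA.
Qed.

Lemma chain_sum_le x m y : 0 <= x -> sorted (fun a b : R => a < b) (x :: rcons m y) ->
  (chain_sum (x :: rcons m y) <= f x y)%E.
Proof.
elim: m x => [|a m IH] x x0; first by rewrite /= adde0.
rewrite rcons_cons chain_sum_cons2 /= => /andP[xa pa].
have ay : a < y by have /allP := order_path_min lt_transitive pa; apply; rewrite mem_rcons mem_head.
apply: le_trans (_ : f x a + f a y <= _)%E; last by apply: f_split => //; apply: ltW.
by apply: leeD => //; apply: IH => //; apply: le_trans (ltW xa).
Qed.

Let sorted_lt_before m y r w : sorted (fun a b : R => a < b) (m ++ y :: r) -> w \in m -> w < y.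
Proof.
elim: m => [|a m IH] //= pa; rewrite inE => /orP[/eqP ->|wm]; last first.
  by apply: IH => //; exact: path_sorted pa.
by have /allP := order_path_min lt_transitive pa; apply; rewrite mem_cat mem_head orbT.
Qed.

Lemma chain_sum_refine t t' x : 0 <= x -> sorted (fun a b : R => a < b) (x :: t) ->
  sorted (fun a b : R => a < b) (x :: t') -> {subset x :: t <= x :: t'} ->
  last x t = last x t' -> (chain_sum (x :: t') <= chain_sum (x :: t))%E.
Proof.
elim: t t' x => [|y t IH] t' x x0 st st' sub hl.
  case: t' st' sub hl => [|z t'] //= st' _ hl.
  have /allP/(_ (last z t')) := order_path_min lt_transitive (st' : path _ x (z :: t')).
  by rewrite mem_last -hl ltxx => /(_ isT).
have xy : x < y by case/andP: st.
have : y \in x :: t' by apply: sub; rewrite inE mem_head orbT.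
rewrite inE => /orP[/eqP yx|yt']; first by move: xy; rewrite yx ltxx.
case/splitPr: yt' st' sub hl => m r st' sub hl; rewrite chain_sum_cat chain_sum_cons2.
apply: leeD.
  apply: chain_sum_le => //.
  by move: st'; rewrite /= cat_path rcons_path => /andP[-> /= /andP[-> _]].
apply: IH; first exact: le_trans (ltW xy).
- exact: path_sorted st.
- by move: st'; rewrite /= cat_path => /andP[_ /path_sorted].
- move=> z; rewrite inE => /orP[/eqP ->|zt]; first exact: mem_head.
  have yz : y < z by have /allP := order_path_min lt_transitive (path_sorted st); apply.
  have : z \in x :: m ++ y :: r by apply: sub; rewrite !inE zt !orbT.
  rewrite inE => /orP[/eqP zx|]; first by move: (lt_trans xy yz); rewrite zx ltxx.
  rewrite mem_cat => /orP[zm|//].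
  by have := lt_trans (sorted_lt_before (path_sorted st') zm) yz; rewrite ltxx.
- by move: hl; rewrite /= last_cat.
Qed.

End ChainSum.

Section Segments.
Variables (d : measure_display) (Omega : measurableType d) (R : realType).
Variables (dT : measure_display) (T : measurableType dT) (X : R -> Omega -> T).
Hypothesis mX : forall s, measurable_fun setT (X s).

Lemma seg_sigma_sigma_algebra a b : sigma_algebra setT (seg_sigma X a b).
Proof. exact: smallest_sigma_algebra. Qed.

Lemma seg_sigma_measurable a b : seg_sigma X a b `<=` measurable.
Proof.
apply: smallest_sub; first exact: sigma_algebra_measurable.
by move=> E [s [A [_ [mA ->]]]]; rewrite -[X s @^-1` A]setTI; exact: mX.
Qed.

Lemma seg_sigma_mono a b a' b' : a' <= a -> b <= b' -> seg_sigma X a b `<=` seg_sigma X a' b'.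
Proof.
move=> a'a bb'; apply: sub_sigma_algebra2 => E [s [A [/andP[as_ sb] [mA ->]]]].
by exists s, A; rewrite (le_trans a'a as_) (lt_le_trans sb bb').
Qed.

Lemma seg_sigma_join a s : a <= s ->
  seg_sigma X 0 s `<=` <<s seg_sigma X 0 a `|` seg_sigma X a s >>.
Proof.
move=> as_; apply: smallest_sub; first exact: smallest_sigma_algebra.
move=> E [u [A [/andP[u0 us] [mA ->]]]]; apply: sub_sigma_algebra.
have [ua|au] := ltP u a.
  by left; apply: sub_sigma_algebra; exists u, A; rewrite u0 ua.
by right; apply: sub_sigma_algebra; exists u, A; rewrite au us.
Qed.

End Segments.

Section DirectedInformation.
Variables (d : measure_display) (Omega : measurableType d) (R : realType).
Variable P : probability Omega R.
Variables (dX dY : measure_display) (TX : measurableType dX) (TY : measurableType dY).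
Variables (X : R -> Omega -> TX) (Y : R -> Omega -> TY).
Hypotheses (mX : forall s, measurable_fun setT (X s)) (mY : forall s, measurable_fun setT (Y s)).

Definition dir_info_seg (a b : R) : \bar R :=
  cmi P (seg_sigma Y a b) (seg_sigma X 0 b) (seg_sigma Y 0 a).

Lemma dir_info_seg_split a s b : 0 <= a -> a <= s -> s <= b ->
  (dir_info_seg a s + dir_info_seg s b <= dir_info_seg a b)%E.
Proof.
move=> a0 as_ sb; apply: cmi_split_le;
  by [exact: seg_sigma_sigma_algebra|exact: seg_sigma_measurable|
      exact: seg_sigma_mono|exact: seg_sigma_join].
Qed.

Lemma dir_info_partE t : dir_info_part P X Y t = chain_sum dir_info_seg t.
Proof.
rewrite /dir_info_part; elim: t => [|x s IH]; first by rewrite big_geq.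
case: s IH => [|y r] IH; first by rewrite big_geq.
rewrite chain_sum_cons2 -IH /= big_ltn // big_add1 /=; congr (_ + _)%E.
by apply: eq_big_nat => -[|j] /andP[].
Qed.

End DirectedInformation.

Unset Implicit Arguments.

Theorem proposition1 (d : measure_display) (Omega : measurableType d)
    (R : realType) (P : probability Omega R)
    (dX dY : measure_display) (TX : measurableType dX) (TY : measurableType dY)
    (X : R -> Omega -> TX) (Y : R -> Omega -> TY)
    (hX : forall s, measurable_fun setT (X s))
    (hY : forall s, measurable_fun setT (Y s))
    (T : R) (t t' : seq R)
    (ht : is_partition T t) (ht' : is_partition T t')
    (href : {subset t <= t'}) :
  (dir_info_part P X Y t' <= dir_info_part P X Y t)%E.
Proof.
rewrite !dir_info_partE; case: ht ht' href => + + + + [+ + + +].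
case: t => [//|x t] _ st /= x0 tT; case: t' => [//|x' t'] _ st' /= x'0 tT' sub.
subst x x'.
apply: chain_sum_refine => //; first exact: dir_info_seg_split.
by rewrite !(last_nth 0) tT tT'.
Qed.
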